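(* Let $p,q>0$ and $0<x,y<\tfrac12$. Then $$B_{p,q}(x,y)\le (2p)^{\frac{2x-1}{2}}(2q)^{\frac{2y-1}{2}}\sqrt{\Gamma(-2x+1,2p)\,\Gamma(-2y+1,2q)}.$$
   Context: $B_{p,q}(x,y)=\int_0^1 t^{x-1}(1-t)^{y-1}\exp\!\left(-\frac{p}{t}-\frac{q}{1-t}\right)dt$ is the extended Beta function, and $\Gamma(s,a)=\int_a^\infty u^{s-1}e^{-u}\,du$ denotes the upper incomplete Gamma function. *)

From Stdlib Require Import Reals.
From Coquelicot Require Import Coquelicot.
Open Scope R_scope.

Definition extBeta_integrand (p q x y t : R) : R :=
  Rpower t (x - 1) * Rpower (1 - t) (y - 1) * exp (- (p / t) - q / (1 - t)).

Definition is_extBeta (p q x y v : R) : Prop :=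
  is_RInt_gen (extBeta_integrand p q x y) (at_right 0) (at_left 1) v.

Definition is_upperGamma (s a v : R) : Prop :=
  is_RInt_gen (fun u => Rpower u (s - 1) * exp (- u))
    (at_point a) (Rbar_locally p_infty) v.

From Stdlib Require Import Reals Lra.
From Coquelicot Require Import Coquelicot.
Open Scope R_scope.

(* Write the integrand of B_{p,q}(x,y) as f(t) g(1 - t) with
   f(t) = t^(x-1) e^(-p/t) and g(t) = t^(y-1) e^(-q/t).  For every l > 0, the inequality
   f g <= (l/2) f^2 + (1/(2l)) g^2 bounds B by (l/2) int f^2 + (1/(2l)) int g^2.  The
   substitution u = 2p/t turns int_a^b f^2 into (2p)^(2x-1) times an integral of
   u^(-2x) e^(-u) over [2p/b, 2p/a], which lies inside [2p, oo) and is therefore at most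
   Gamma(1-2x, 2p); the same holds for g.  Minimising over l turns the sum of the two bounds
   into the geometric mean.  The improper integrals are handled through the fact that
   limits of partial integrals preserve closed properties. *)

(* The integral hypothesis comes first so that it fixes the filters before the
   [ProperFilter'] instances are searched. *)
Lemma is_RInt_gen_closed {V : NormedModule R_AbsRing} {Fa Fb : (R -> Prop) -> Prop}
  {FFa : ProperFilter' Fa} {FFb : ProperFilter' Fb}
  (f : R -> V) (D : V -> Prop) (l : V) :
  is_RInt_gen f Fa Fb l -> closed D ->
  filter_prod Fa Fb (fun ab => forall v, is_RInt f (fst ab) (snd ab) v -> D v) -> D l.
Proof.
  intros Hl HD Hev. apply HD. intros Hout.
  apply (@filter_not_empty _ (filter_prod Fa Fb) _).
  generalize (filter_and _ _ Hev (Hl _ Hout)).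
  apply filter_imp. intros ab [HDab [v [Hv HnD]]]. exact (HnD (HDab v Hv)).
Qed.

Lemma mult_le_weighted_sq l u v : 0 < l -> u * v <= l / 2 * u ^ 2 + / (2 * l) * v ^ 2.
Proof.
  intros Hl.
  assert (0 <= (l * u - v) ^ 2 / (2 * l)) by (apply Rdiv_le_0_compat; [apply pow2_ge_0 | lra]).
  replace (l / 2 * u ^ 2 + / (2 * l) * v ^ 2) with (u * v + (l * u - v) ^ 2 / (2 * l))
    by (field; lra).
  lra.
Qed.

Lemma le_mult_of_forall_weighted_sq s1 s2 B : 0 <= s1 -> 0 <= s2 ->
  (forall l, 0 < l -> B <= l / 2 * s1 ^ 2 + / (2 * l) * s2 ^ 2) -> B <= s1 * s2.
Proof.
  intros H1 H2 HB. apply Rle_plus_epsilon. intros eps Heps.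
  set (e := eps / (s1 + s2 + 1)).
  assert (He : 0 < e) by (apply Rdiv_lt_0_compat; lra).
  assert (Hes : e * (s1 + s2) = eps - e) by (unfold e; field; lra).
  clearbody e.
  (* A perturbation of the optimal weight s2 / s1, which is undefined when s1 = 0. *)
  specialize (HB ((s2 + e) / (s1 + e)) ltac:(apply Rdiv_lt_0_compat; lra)).
  assert (Hgap1 : 0 <= (s2 + e) * s1 * e / (2 * (s1 + e)))
    by (apply Rdiv_le_0_compat; [repeat apply Rmult_le_pos |]; lra).
  assert (Hgap2 : 0 <= (s1 + e) * s2 * e / (2 * (s2 + e)))
    by (apply Rdiv_le_0_compat; [repeat apply Rmult_le_pos |]; lra).
  assert (Ht1 : (s2 + e) / (s1 + e) / 2 * s1 ^ 2
                = (s2 + e) * s1 / 2 - (s2 + e) * s1 * e / (2 * (s1 + e))) by (field; lra).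
  assert (Ht2 : / (2 * ((s2 + e) / (s1 + e))) * s2 ^ 2
                = (s1 + e) * s2 / 2 - (s1 + e) * s2 * e / (2 * (s2 + e))) by (field; lra).
  nra.
Qed.

Lemma sq_Rpower_half_mult_sqrt a e G : 0 <= G ->
  (Rpower a (e / 2) * sqrt G) ^ 2 = Rpower a e * G.
Proof.
  intros HG. rewrite Rpow_mult_distr, pow2_sqrt by exact HG.
  simpl. rewrite Rmult_1_r, <- Rpower_plus. do 2 f_equal. field.
Qed.

Definition gamma_integrand (s u : R) : R := Rpower u (s - 1) * exp (- u).

Lemma gamma_integrand_ge0 s u : 0 <= gamma_integrand s u.
Proof. unfold gamma_integrand, Rpower. apply Rmult_le_pos; left; apply exp_pos. Qed.

Lemma gamma_integrand_continuous s u : 0 < u -> continuous (gamma_integrand s) u.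
Proof.
  intros Hu. apply (@ex_derive_continuous R_AbsRing R_NormedModule).
  unfold gamma_integrand, Rpower. auto_derive. lra.
Qed.

Lemma ex_RInt_gamma_integrand s a b : 0 < a -> 0 < b -> ex_RInt (gamma_integrand s) a b.
Proof.
  intros Ha Hb. apply (@ex_RInt_continuous R_CompleteNormedModule).
  intros u Hu. apply gamma_integrand_continuous.
  assert (0 < Rmin a b) by (apply Rmin_glb_lt; lra). lra.
Qed.

Lemma RInt_gamma_integrand_ge0 s a b : 0 < a <= b -> 0 <= RInt (gamma_integrand s) a b.
Proof.
  intros Hab. apply RInt_ge_0; [lra | apply ex_RInt_gamma_integrand; lra |].
  intros; apply gamma_integrand_ge0.
Qed.

Lemma RInt_gamma_integrand_le_upperGamma s c a b G : 0 < c -> c <= a <= b ->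
  is_upperGamma s c G -> RInt (gamma_integrand s) a b <= G.
Proof.
  intros Hc Hab HG.
  apply (is_RInt_gen_closed _ _ _ HG (closed_ge _)).
  apply (Filter_prod _ _ _ (fun u => u = c) (fun X => b < X)); [reflexivity | now exists b |].
  intros c' X -> HX v Hv; simpl in Hv. fold (gamma_integrand s) in Hv.
  apply (@is_RInt_unique R_CompleteNormedModule) in Hv. subst v.
  rewrite <- (@RInt_Chasles R_CompleteNormedModule _ c a X),
          <- (@RInt_Chasles R_CompleteNormedModule _ a b X)
    by (apply ex_RInt_gamma_integrand; lra).
  assert (0 <= RInt (gamma_integrand s) c a) by (apply RInt_gamma_integrand_ge0; lra).
  assert (0 <= RInt (gamma_integrand s) b X) by (apply RInt_gamma_integrand_ge0; lra).
  unfold plus; simpl. lra.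
Qed.

Lemma upperGamma_ge0 s c G : 0 < c -> is_upperGamma s c G -> 0 <= G.
Proof.
  intros Hc HG.
  replace 0 with (RInt (gamma_integrand s) c c)
    by exact (RInt_point (V := R_CompleteNormedModule) c _).
  apply (RInt_gamma_integrand_le_upperGamma s c); [lra | lra | exact HG].
Qed.

Definition extBeta_factor (p x t : R) : R := Rpower t (x - 1) * exp (- (p / t)).

Lemma extBeta_integrand_eq_factors p q x y t :
  extBeta_integrand p q x y t = extBeta_factor p x t * extBeta_factor q y (1 - t).
Proof.
  unfold extBeta_integrand, extBeta_factor.
  replace (- (p / t) - q / (1 - t)) with (- (p / t) + - (q / (1 - t))) by ring.
  rewrite exp_plus. ring.
Qed.

(* The integrand of the substitution u = 2p/t, whose Jacobian is 2p/t^2. *)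
Lemma extBeta_factor_sq p x t : 0 < p -> 0 < t ->
  extBeta_factor p x t ^ 2
  = Rpower (2 * p) (2 * x - 1) * (2 * p / t ^ 2) * gamma_integrand (- 2 * x + 1) (2 * p / t).
Proof.
  intros Hp Ht.
  assert (Hjac : 2 * p / t ^ 2 = exp (ln (2 * p) + - (ln t + ln t))).
  { rewrite exp_plus, exp_Ropp, exp_plus, !exp_ln by lra. field. lra. }
  unfold extBeta_factor, gamma_integrand, Rpower.
  rewrite Hjac, ln_div by lra.
  rewrite <- !exp_plus. simpl pow. rewrite Rmult_1_r, <- !exp_plus.
  f_equal. field. lra.
Qed.

Lemma is_RInt_extBeta_factor_sq p x a b : 0 < p -> 0 < a < b ->
  is_RInt (fun t => extBeta_factor p x t ^ 2) a b
    (Rpower (2 * p) (2 * x - 1) * RInt (gamma_integrand (- 2 * x + 1)) (2 * p / b) (2 * p / a)).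
Proof.
  intros Hp Hab.
  set (g := gamma_integrand (- 2 * x + 1)).
  set (C := Rpower (2 * p) (2 * x - 1)).
  assert (Hpos : forall t, Rmin a b <= t <= Rmax a b -> 0 < t).
  { intros t Ht. rewrite Rmin_left in Ht; lra. }
  assert (Hsub : is_RInt (fun t => scal (- (2 * p) / t ^ 2) (g (2 * p / t))) a b
                   (RInt g (2 * p / a) (2 * p / b))).
  { apply (@is_RInt_comp R_CompleteNormedModule g (fun t => 2 * p / t)).
    - intros t Ht. specialize (Hpos t Ht).
      apply gamma_integrand_continuous, Rdiv_lt_0_compat; lra.
    - intros t Ht. specialize (Hpos t Ht). split.
      + auto_derive; [lra | field; lra].
      + apply (@ex_derive_continuous R_AbsRing R_NormedModule). auto_derive. nra. }
  apply (is_RInt_scal _ _ _ (- C)) in Hsub.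
  rewrite <- (opp_RInt_swap g) in Hsub
    by (apply ex_RInt_gamma_integrand; apply Rdiv_lt_0_compat; lra).
  replace (C * RInt g (2 * p / b) (2 * p / a))
    with (scal (- C) (opp (RInt g (2 * p / b) (2 * p / a))))
    by (unfold scal, opp; simpl; unfold mult; simpl; ring).
  refine (is_RInt_ext _ _ _ _ _ _ Hsub). intros t Ht.
  rewrite extBeta_factor_sq by (rewrite Rmin_left in Ht; lra).
  unfold scal; simpl; unfold mult; simpl. fold g C. field. rewrite Rmin_left in Ht; lra.
Qed.

Lemma extBeta_factor_sq_integral_le p x G a b : 0 < p -> 0 < a < b -> b <= 1 ->
  is_upperGamma (- 2 * x + 1) (2 * p) G ->
  exists I, is_RInt (fun t => extBeta_factor p x t ^ 2) a b I
            /\ I <= Rpower (2 * p) (2 * x - 1) * G.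
Proof.
  intros Hp Hab Hb HG.
  eexists; split; [now apply is_RInt_extBeta_factor_sq |].
  apply Rmult_le_compat_l; [left; apply exp_pos |].
  apply (RInt_gamma_integrand_le_upperGamma _ (2 * p)); [lra | | exact HG].
  unfold Rdiv. rewrite <- (Rmult_1_r (2 * p)) at 1.
  split; apply Rmult_le_compat_l; try lra.
  - rewrite <- Rinv_1. apply Rinv_le_contravar; lra.
  - apply Rinv_le_contravar; lra.
Qed.

Lemma extBeta_factor_sq_reflect_integral_le q y G a b : 0 < q -> 0 <= a < b -> b < 1 ->
  is_upperGamma (- 2 * y + 1) (2 * q) G ->
  exists I, is_RInt (fun t => extBeta_factor q y (1 - t) ^ 2) a b I
            /\ I <= Rpower (2 * q) (2 * y - 1) * G.
Proof.
  intros Hq Hab Hb HG.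
  destruct (extBeta_factor_sq_integral_le q y G (1 - b) (1 - a) Hq ltac:(lra) ltac:(lra) HG)
    as [J [HJ HJle]].
  exists J; split; [| exact HJle].
  apply is_RInt_swap in HJ.
  replace (1 - a) with (-1 * a + 1) in HJ by ring.
  replace (1 - b) with (-1 * b + 1) in HJ by ring.
  apply is_RInt_comp_lin, (is_RInt_scal _ _ _ (-1)) in HJ.
  replace J with (scal (-1) (opp J)) by (unfold scal, opp; simpl; unfold mult; simpl; ring).
  refine (is_RInt_ext _ _ _ _ _ _ HJ). intros t Ht.
  unfold scal; simpl; unfold mult; simpl.
  replace (-1 * t + 1) with (1 - t) by ring. ring.
Qed.

Lemma extBeta_le_weighted_sum p q x y B G1 G2 l : 0 < p -> 0 < q -> 0 < l ->
  is_extBeta p q x y B ->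
  is_upperGamma (- 2 * x + 1) (2 * p) G1 ->
  is_upperGamma (- 2 * y + 1) (2 * q) G2 ->
  B <= l / 2 * (Rpower (2 * p) (2 * x - 1) * G1)
       + / (2 * l) * (Rpower (2 * q) (2 * y - 1) * G2).
Proof.
  intros Hp Hq Hl HB HG1 HG2.
  apply (is_RInt_gen_closed _ _ _ HB (closed_le _)).
  apply (Filter_prod _ _ _ (fun a => 0 < a < 1/2) (fun b => 1/2 < b < 1)).
  - exists (mkposreal (1/2) ltac:(lra)). intros a Ha Ha0.
    change (Rabs (a - 0) < 1/2) in Ha. rewrite Rminus_0_r, Rabs_pos_eq in Ha; lra.
  - exists (mkposreal (1/2) ltac:(lra)). intros b Hb Hb1.
    change (Rabs (b - 1) < 1/2) in Hb. rewrite Rabs_left in Hb; simpl in Hb; lra.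
  - intros a b Ha Hb v Hv; simpl in Hv.
    destruct (extBeta_factor_sq_integral_le p x G1 a b) as [I1 [HI1 HI1le]];
      try lra; [exact HG1 |].
    destruct (extBeta_factor_sq_reflect_integral_le q y G2 a b) as [I2 [HI2 HI2le]];
      try lra; [exact HG2 |].
    assert (Hsum := is_RInt_plus _ _ _ _ _ _ (is_RInt_scal _ _ _ (l / 2) _ HI1)
                                             (is_RInt_scal _ _ _ (/ (2 * l)) _ HI2)).
    assert (Hv_le : v <= l / 2 * I1 + / (2 * l) * I2).
    { apply (is_RInt_le _ _ a b _ _ ltac:(lra) Hv Hsum). intros t _.
      rewrite extBeta_integrand_eq_factors. apply mult_le_weighted_sq, Hl. }
    assert (0 < / (2 * l)) by (apply Rinv_0_lt_compat; lra).
    nra.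
Qed.

Theorem mainTheorem2 (p q x y B G1 G2 : R) :
  0 < p -> 0 < q -> 0 < x < 1/2 -> 0 < y < 1/2 ->
  is_extBeta p q x y B ->
  is_upperGamma (- 2 * x + 1) (2 * p) G1 ->
  is_upperGamma (- 2 * y + 1) (2 * q) G2 ->
  B <= Rpower (2 * p) ((2 * x - 1) / 2) * Rpower (2 * q) ((2 * y - 1) / 2)
       * sqrt (G1 * G2).
Proof.
  intros Hp Hq _ _ HB HG1 HG2.
  assert (HG1pos := upperGamma_ge0 _ (2 * p) G1 ltac:(lra) HG1).
  assert (HG2pos := upperGamma_ge0 _ (2 * q) G2 ltac:(lra) HG2).
  rewrite sqrt_mult by assumption.
  replace (Rpower (2 * p) ((2 * x - 1) / 2) * Rpower (2 * q) ((2 * y - 1) / 2)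
           * (sqrt G1 * sqrt G2))
    with ((Rpower (2 * p) ((2 * x - 1) / 2) * sqrt G1)
          * (Rpower (2 * q) ((2 * y - 1) / 2) * sqrt G2)) by ring.
  apply le_mult_of_forall_weighted_sq.
  - apply Rmult_le_pos; [left; apply exp_pos | apply sqrt_pos].
  - apply Rmult_le_pos; [left; apply exp_pos | apply sqrt_pos].
  - intros l Hl. rewrite !sq_Rpower_half_mult_sqrt by assumption.
    now apply extBeta_le_weighted_sum.
Qed.
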